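(* Let $M$ be a nearly finitary matroid on ground set $E$ that is not $n$-nearly finitary for any $n\in\mathbb{N}$, and let $S\subseteq E$ be finite. Then the deletion $M-S$ is a nearly finitary matroid that is not $n$-nearly finitary for any $n\in\mathbb{N}$.
   Context: Matroids (possibly infinite): $\emptyset$ independent; subsets of independent sets independent; if $B$ is maximal independent and $A$ non-maximal independent, then $A\cup\{b\}$ is independent for some $b\in B\setminus A$; for independent $A\subseteq X\subseteq E$ there is a maximal independent $S'$ with $A\subseteq S'\subseteq X$. Bases are maximal independent sets. The deletion $M-S$ is the matroid on $E\setminus S$ whose independent sets are the independent sets of $M$ contained in $E\setminus S$. The finitarization $M^{\mathrm{fin}}$ has as independent sets those sets all of whose finite subsets are independent in $M$. $M$ is nearly finitary if $F\setminus B$ is finite whenever a base $F$ of $M^{\mathrm{fin}}$ contains a base $B$ of $M$; $n$-nearly finitary if $|F\setminus B|\le n$ for all such pairs. *)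

From Stdlib Require Import List Arith.

Definition subset {T} (A B : T -> Prop) : Prop := forall x, A x -> B x.
Definition setminus {T} (A B : T -> Prop) : T -> Prop := fun x => A x /\ ~ B x.
Definition set_add {T} (A : T -> Prop) (b : T) : T -> Prop := fun x => A x \/ x = b.
Definition emptyset {T} : T -> Prop := fun _ => False.

Definition finite {T} (A : T -> Prop) : Prop :=
  exists l : list T, forall x, A x -> In x l.

Definition card_le {T} (A : T -> Prop) (n : nat) : Prop :=
  exists l : list T, length l <= n /\ forall x, A x -> In x l.

Definition is_base {T} (I : (T -> Prop) -> Prop) (B : T -> Prop) : Prop :=
  I B /\ forall B', I B' -> subset B B' -> subset B' B.

Definition maximal_in {T} (I : (T -> Prop) -> Prop) (X S : T -> Prop) : Prop :=
  I S /\ subset S X /\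
  forall S', I S' -> subset S S' -> subset S' X -> subset S' S.

Definition is_matroid {T} (E : T -> Prop) (I : (T -> Prop) -> Prop) : Prop :=
  (forall A, I A -> subset A E) /\
  I emptyset /\
  (forall A B, I A -> subset B A -> I B) /\
  (forall A B, I A -> ~ is_base I A -> is_base I B ->
     exists b, B b /\ ~ A b /\ I (set_add A b)) /\
  (forall A X, I A -> subset A X -> subset X E ->
     exists S', subset A S' /\ maximal_in I X S').

Definition del_ground {T} (E S : T -> Prop) : T -> Prop := setminus E S.
Definition del_indep {T} (E : T -> Prop) (I : (T -> Prop) -> Prop) (S : T -> Prop)
  : (T -> Prop) -> Prop :=
  fun A => I A /\ subset A (setminus E S).

Definition fin_indep {T} (E : T -> Prop) (I : (T -> Prop) -> Prop)
  : (T -> Prop) -> Prop :=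
  fun A => subset A E /\ forall F, subset F A -> finite F -> I F.

Definition nearly_finitary {T} (E : T -> Prop) (I : (T -> Prop) -> Prop) : Prop :=
  forall F B, is_base (fin_indep E I) F -> is_base I B -> subset B F ->
    finite (setminus F B).

Definition n_nearly_finitary {T} (n : nat) (E : T -> Prop) (I : (T -> Prop) -> Prop)
  : Prop :=
  forall F B, is_base (fin_indep E I) F -> is_base I B -> subset B F ->
    card_le (setminus F B) n.

From Stdlib Require Import List Lia Classical FunctionalExtensionality PropExtensionality.

(* A maximal independent subset [B] of a set [Y] still obeys the augmentation
   axiom: extend [B] to a base [B'] of [M] and augment in [M] inside
   [A + x] together with the part of [B'] outside [Y].  So restrictions (deletions)
   are matroids, and a maximal independent subset of a base of the finitarization
   of [M|Y] is a base of [M|Y].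

   Putting back the finitely many deleted elements one at a time extends a base of
   the finitarization of [M - S] to one of [M], so near finitarity passes to [M - S].
   Conversely, when one element [s] is put back, a base [F] of the finitarization
   loses at most [s] and gains at most one element on deleting [s] (two new elements
   would violate exchange in a finite set), and a base [B ⊆ F] changes by at most [s]
   and one element; so [|F \ B|] grows by at most 2, and an n-nearly finitary
   [M - S] would make [M] (n + 2|S|)-nearly finitary. *)

Definition restrict {T} (P : (T -> Prop) -> Prop) (Y : T -> Prop) : (T -> Prop) -> Prop :=
  fun A => P A /\ subset A Y.

Section Sets.
Context {T : Type}.
Implicit Types A B Y Z : T -> Prop.

Lemma set_ext {A B} : (forall x, A x <-> B x) -> A = B.
Proof.
  intros HAB; apply functional_extensionality; intros x.
  apply propositional_extensionality, HAB.
Qed.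

Lemma set_add_mono {A B x} : subset A B -> subset (set_add A x) (set_add B x).
Proof. intros HAB y [Hy | Hy]; [left; apply HAB, Hy | right; exact Hy]. Qed.

Lemma finite_subset {A B} : finite B -> subset A B -> finite A.
Proof. intros [l Hl] HAB; exists l; intros x Hx; apply Hl, HAB, Hx. Qed.

Lemma finite_union {A B} : finite A -> finite B -> finite (fun x => A x \/ B x).
Proof.
  intros [la Hla] [lb Hlb]; exists (la ++ lb).
  intros x [Hx | Hx]; apply in_or_app; [left | right]; auto.
Qed.

Lemma finite_add {A x} : finite A -> finite (set_add A x).
Proof. intros [l Hl]; exists (x :: l); intros y [Hy | ->]; [right; auto | left; reflexivity]. Qed.

Lemma card_le_subset {A B n} : card_le B n -> subset A B -> card_le A n.
Proof. intros [l [Hlen Hl]] HAB; exists l; split; [exact Hlen | intros x Hx; apply Hl, HAB, Hx]. Qed.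

Lemma card_le_union {A B m n} : card_le A m -> card_le B n -> card_le (fun x => A x \/ B x) (m + n).
Proof.
  intros [la [Hla HA]] [lb [Hlb HB]]; exists (la ++ lb); split.
  - rewrite length_app; lia.
  - intros x [Hx | Hx]; apply in_or_app; [left | right]; auto.
Qed.

Lemma finite_difference_ind (Q : (T -> Prop) -> Prop) Z :
  (forall Y Y' a, subset Y Y' -> subset Y' Z -> (forall x, Y' x -> ~ Y x -> x = a) ->
     Q Y -> Q Y') ->
  forall l Y, subset Y Z -> (forall x, Z x -> ~ Y x -> In x l) -> Q Y -> Q Z.
Proof.
  intros Hstep l; induction l as [| a l IH]; intros Y HYZ Hl HQ.
  - replace Z with Y; [exact HQ |].
    apply set_ext; intros x; split; [apply HYZ |].
    intros Hx; apply NNPP; intros HYx; exact (Hl x Hx HYx).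
  - apply (IH (fun x => Z x /\ (Y x \/ x = a))).
    + intros x [Hx _]; exact Hx.
    + intros x Hx HY1x.
      assert (HYx : ~ Y x) by (intros HYx; apply HY1x; split; auto).
      destruct (Hl x Hx HYx) as [<- | Hxl]; [exfalso; apply HY1x; split; auto | exact Hxl].
    + apply (Hstep Y _ a); [intros x Hx; split; auto | intros x [Hx _]; exact Hx | | exact HQ].
      intros x [_ [HYx | ->]] HnYx; [contradiction | reflexivity].
Qed.

End Sets.

Section IndependenceSystems.
Context {T : Type}.
Implicit Types (P Q : (T -> Prop) -> Prop) (A B F G X Y Z : T -> Prop).

Lemma is_base_ext {P Q B} : (forall A, P A <-> Q A) -> is_base P B <-> is_base Q B.
Proof.
  intros HPQ; split; intros [HB Hmax]; split;
    try (apply HPQ; exact HB); intros G HG; apply Hmax, HPQ, HG.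
Qed.

Lemma is_base_restrict {P Y B} : is_base (restrict P Y) B <-> maximal_in P Y B.
Proof.
  split.
  - intros [[HB HBY] Hmax]; repeat split; auto.
    intros G HG HBG HGY; apply Hmax; [split |]; auto.
  - intros [HB [HBY Hmax]]; split; [split; auto |].
    intros G [HG HGY] HBG; apply Hmax; auto.
Qed.

Lemma is_base_maximal_in {P X B} :
  (forall A, P A -> subset A X) -> is_base P B <-> maximal_in P X B.
Proof.
  intros HX; split.
  - intros [HB Hmax]; repeat split; auto.
  - intros [HB [_ Hmax]]; split; auto.
Qed.

Lemma maximal_in_mono {P Y Y' B} :
  maximal_in P Y B -> subset B Y' -> subset Y' Y -> maximal_in P Y' B.
Proof.
  intros [HB [_ Hmax]] HBY' HY'Y; repeat split; auto.
  intros G HG HBG HGY'; apply Hmax; auto.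
  intros x Hx; apply HY'Y, HGY', Hx.
Qed.

Lemma not_is_base_extend {P A G x} : P G -> subset A G -> G x -> ~ A x -> ~ is_base P A.
Proof. intros HG HAG Hx HAx [_ Hmax]; apply HAx, (Hmax G HG HAG), Hx. Qed.

Section DownClosed.
Context {P : (T -> Prop) -> Prop}.
Hypothesis P_down : forall A B, P A -> subset B A -> P B.

Lemma not_maximal_in_ex {Y A} :
  P A -> subset A Y -> ~ maximal_in P Y A -> exists x, Y x /\ ~ A x /\ P (set_add A x).
Proof.
  intros HA HAY Hn; apply NNPP; intros Hno; apply Hn.
  repeat split; auto.
  intros G HG HAG HGY x Hx; apply NNPP; intros HAx; apply Hno.
  exists x; repeat split; auto.
  apply (P_down _ _ HG); intros y [Hy | ->]; auto.
Qed.

Lemma maximal_in_cap {Y B G} :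
  maximal_in P Y B -> subset B G -> P G -> forall x, G x -> Y x -> B x.
Proof.
  intros [_ [HBY Hmax]] HBG HG x Hx HYx.
  apply (Hmax (fun z => G z /\ Y z)); [| | | split; auto].
  - apply (P_down _ _ HG); intros z [Hz _]; exact Hz.
  - intros z Hz; split; auto.
  - intros z [_ Hz]; exact Hz.
Qed.

Lemma maximal_in_add_one {Y Z F a} :
  maximal_in P Y F -> subset Y Z -> (forall x, Z x -> ~ Y x -> x = a) ->
  exists F', subset F F' /\ maximal_in P Z F'.
Proof.
  intros HF HYZ Ha; pose proof HF as [HFP [HFY _]].
  destruct (classic (Z a /\ P (set_add F a))) as [[HZa HFa] | Hna].
  - exists (set_add F a); split; [intros x Hx; left; exact Hx |].
    split; [exact HFa | split].
    + intros x [Hx | ->]; [apply HYZ, HFY, Hx | exact HZa].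
    + intros G HG HFG HGZ x Hx; destruct (classic (Y x)) as [HYx | HYx].
      * left; apply (maximal_in_cap HF (fun z Hz => HFG z (or_introl Hz)) HG); auto.
      * right; auto.
  - exists F; split; [intros x Hx; exact Hx |].
    split; [exact HFP | split; [intros x Hx; apply HYZ, HFY, Hx |]].
    intros G HG HFG HGZ x Hx; destruct (classic (Y x)) as [HYx | HYx].
    + apply (maximal_in_cap HF HFG HG); auto.
    + exfalso; apply Hna; assert (x = a) as <- by auto.
      split; [apply HGZ, Hx |].
      apply (P_down _ _ HG); intros z [Hz | ->]; auto.
Qed.

End DownClosed.
End IndependenceSystems.

Section Matroid.
Context {T : Type} {E : T -> Prop} {I : (T -> Prop) -> Prop}.
Hypothesis HM : is_matroid E I.
Implicit Types A B D F G J W X Y Z : T -> Prop.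

Lemma indep_ground {A} : I A -> subset A E.
Proof. destruct HM as (H & _); apply H. Qed.

Lemma indep_subset {A B} : I A -> subset B A -> I B.
Proof. destruct HM as (_ & _ & H & _); apply H. Qed.

Lemma indep_augment {A B} :
  I A -> ~ is_base I A -> is_base I B -> exists b, B b /\ ~ A b /\ I (set_add A b).
Proof. destruct HM as (_ & _ & _ & H & _); apply H. Qed.

Lemma indep_maximal {A X} :
  I A -> subset A X -> subset X E -> exists S, subset A S /\ maximal_in I X S.
Proof. destruct HM as (_ & _ & _ & _ & H); apply H. Qed.

Lemma is_base_maximal_in_ground {B} : is_base I B <-> maximal_in I E B.
Proof. apply is_base_maximal_in; intros A; apply indep_ground. Qed.

Lemma base_extend {A} : I A -> exists B, subset A B /\ is_base I B.
Proof.
  intros HA; destruct (indep_maximal HA (indep_ground HA) (fun x Hx => Hx)) as [B [HAB HB]].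
  exists B; split; [exact HAB | apply is_base_maximal_in_ground, HB].
Qed.

Lemma base_outside_subset {Y B B' J} :
  maximal_in I Y B -> subset B B' -> is_base I B' -> is_base I J ->
  (forall z, J z -> Y z \/ B' z) -> forall z, B' z -> ~ Y z -> J z.
Proof.
  intros HB HBB' HB' HJ HJYB'; pose proof HB as (_ & HBY & HBmax).
  set (L := fun z => B z \/ (J z /\ B' z /\ ~ Y z)).
  assert (HLB' : subset L B') by (intros z [Hz | (_ & Hz & _)]; auto).
  assert (HLb : is_base I L).
  { apply NNPP; intros HLnb.
    destruct (indep_augment (indep_subset (proj1 HB') HLB') HLnb HJ) as [j [HJj [HLj HLjI]]].
    apply HLj; destruct (classic (Y j)) as [HYj | HYj].
    - left; apply (HBmax (set_add B j)); [| intros z Hz; left; exact Hz | | right; reflexivity].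
      + apply (indep_subset HLjI), set_add_mono; intros z Hz; left; exact Hz.
      + intros z [Hz | ->]; [apply HBY, Hz | exact HYj].
    - right; destruct (HJYB' j HJj) as [? | HB'j]; [contradiction | auto]. }
  intros z Hz HYz.
  destruct (proj2 HLb B' (proj1 HB') HLB' z Hz) as [HBz | (HJz & _)]; [| exact HJz].
  exfalso; apply HYz, HBY, HBz.
Qed.

Lemma maximal_in_augment {Y A B x} :
  maximal_in I Y B -> subset A Y -> Y x -> ~ A x -> I (set_add A x) ->
  exists b, B b /\ ~ A b /\ I (set_add A b).
Proof.
  intros HB HAY HYx HAx HAxI.
  destruct (base_extend (proj1 HB)) as [B' [HBB' HB']].
  pose proof (maximal_in_cap (@indep_subset) HB HBB' (proj1 HB')) as HB'Y.
  (* Whatever the base axiom adds from [B'] to a set containing [B' \ Y] lies in [Y], hence in [B]. *)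
  set (Z := fun z => set_add A x z \/ (B' z /\ ~ Y z)).
  destruct (indep_maximal (X := Z) HAxI) as [J [HAJ [HJ [HJZ HJmax]]]].
  { intros z Hz; left; exact Hz. }
  { intros z [Hz | [Hz _]]; [apply (indep_ground HAxI), Hz | apply (indep_ground (proj1 HB')), Hz]. }
  assert (HAJ' : subset A J) by (intros z Hz; apply HAJ; left; exact Hz).
  destruct (classic (is_base I J)) as [HJb | HJnb].
  - assert (HB'J : forall z, B' z -> ~ Y z -> J z).
    { apply (base_outside_subset HB HBB' HB' HJb).
      intros z Hz; destruct (HJZ z Hz) as [[HAz | ->] | [HB'z _]]; auto. }
    set (A2 := fun z => A z \/ (B' z /\ ~ Y z)).
    assert (HA2J : subset A2 J) by (intros z [Hz | [Hz HYz]]; auto).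
    assert (HA2nb : ~ is_base I A2).
    { apply (not_is_base_extend HJ HA2J (HAJ x (or_intror eq_refl))).
      intros [Hx | [_ Hx]]; auto. }
    destruct (indep_augment (indep_subset HJ HA2J) HA2nb HB') as [b [HB'b [HA2b HA2bI]]].
    assert (HYb : Y b) by (apply NNPP; intros HYb; apply HA2b; right; auto).
    exists b; repeat split; [apply HB'Y; auto | intros HAb; apply HA2b; left; exact HAb |].
    apply (indep_subset HA2bI), set_add_mono; intros z Hz; left; exact Hz.
  - destruct (indep_augment HJ HJnb HB') as [b [HB'b [HJb HJbI]]].
    assert (HYb : Y b).
    { apply NNPP; intros HYb; apply HJb.
      apply (HJmax (set_add J b) HJbI); [intros z Hz; left; exact Hz | | right; reflexivity].
      intros z [Hz | ->]; [apply HJZ, Hz | right; auto]. }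
    exists b; repeat split; [apply HB'Y; auto | intros HAb; apply HJb, HAJ', HAb |].
    apply (indep_subset HJbI), set_add_mono, HAJ'.
Qed.

Lemma nonmaximal_augment {Y A B} :
  I A -> subset A Y -> ~ maximal_in I Y A -> maximal_in I Y B ->
  exists b, B b /\ ~ A b /\ I (set_add A b).
Proof.
  intros HA HAY HAnm HB.
  destruct (not_maximal_in_ex (@indep_subset) HA HAY HAnm) as [x [HYx [HAx HAxI]]].
  exact (maximal_in_augment HB HAY HYx HAx HAxI).
Qed.

Lemma restrict_matroid {Y} : subset Y E -> is_matroid Y (restrict I Y).
Proof.
  intros HYE; split; [| split; [| split; [| split]]].
  - intros A [_ HAY]; exact HAY.
  - split; [destruct HM as (_ & H0 & _); exact H0 | intros x []].
  - intros A B [HA HAY] HBA; split; [exact (indep_subset HA HBA) | intros x Hx; apply HAY, HBA, Hx].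
  - intros A B [HA HAY] HAnb HB.
    assert (HAnm : ~ maximal_in I Y A) by (intros HAm; apply HAnb, (proj2 is_base_restrict HAm)).
    destruct (nonmaximal_augment HA HAY HAnm (proj1 is_base_restrict HB)) as [b [HBb [HAb HAbI]]].
    exists b; repeat split; auto.
    intros x [Hx | ->]; [apply HAY, Hx | apply (proj2 (proj1 HB)), HBb].
  - intros A X [HA _] HAX HXY.
    destruct (indep_maximal HA HAX (fun x Hx => HYE x (HXY x Hx))) as [S [HAS [HS [HSX HSmax]]]].
    exists S; repeat split; auto.
    + intros x Hx; apply HXY, HSX, Hx.
    + intros G [HG _]; apply HSmax, HG.
Qed.

Lemma fin_indep_subset {A B} : fin_indep E I A -> subset B A -> fin_indep E I B.
Proof.
  intros [HAE HA] HBA; split; [intros x Hx; apply HAE, HBA, Hx |].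
  intros D HDB HD; apply HA; [intros x Hx; apply HBA, HDB, Hx | exact HD].
Qed.

Lemma not_fin_indep_dependent {A} :
  subset A E -> ~ fin_indep E I A -> exists D, subset D A /\ finite D /\ ~ I D.
Proof.
  intros HAE HA; apply NNPP; intros Hno; apply HA; split; [exact HAE |].
  intros D HDA HD; apply NNPP; intros HDnI; apply Hno; exists D; auto.
Qed.

Lemma is_base_fin_ground {F} : is_base (fin_indep E I) F <-> maximal_in (fin_indep E I) E F.
Proof. apply is_base_maximal_in; intros A HA; exact (proj1 HA). Qed.

Lemma is_base_fin_restrict {Y F} :
  subset Y E -> is_base (fin_indep Y (restrict I Y)) F <-> maximal_in (fin_indep E I) Y F.
Proof.
  intros HYE; transitivity (is_base (restrict (fin_indep E I) Y) F); [| apply is_base_restrict].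
  apply is_base_ext; intros A; split.
  - intros [HAY HA]; split; [split |]; auto.
    + intros x Hx; apply HYE, HAY, Hx.
    + intros D HDA HD; apply (HA D HDA HD).
  - intros [[_ HA] HAY]; split; [exact HAY |].
    intros D HDA HD; split; [apply HA; auto | intros x Hx; apply HAY, HDA, Hx].
Qed.

Lemma maximal_in_add_dependent {F J D e} :
  maximal_in I F J -> subset D (set_add F e) -> ~ I D -> (forall x, D x -> x <> e -> J x) ->
  maximal_in I (set_add F e) J.
Proof.
  intros (HJ & HJF & HJmax) HDFe HD HDJ.
  split; [exact HJ | split; [intros x Hx; left; apply HJF, Hx |]].
  intros G HG HJG HGFe x Hx.
  assert (HGe : ~ G e).
  { intros HGe; apply HD, (indep_subset HG); intros y Hy.
    destruct (classic (y = e)) as [-> | Hye]; [exact HGe | apply HJG, HDJ; auto]. }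
  apply (HJmax G HG HJG); [| exact Hx].
  intros y Hy; destruct (HGFe y Hy) as [? | ->]; [auto | contradiction].
Qed.

Lemma maximal_in_of_fin_maximal_in {Y F B} :
  subset Y E -> maximal_in (fin_indep E I) Y F -> maximal_in I F B -> maximal_in I Y B.
Proof.
  intros HYE HF HB; pose proof HF as (HFfin & HFY & HFmax); pose proof HB as (HBI & HBF & HBmax).
  apply NNPP; intros HBnm.
  destruct (not_maximal_in_ex (@indep_subset) HBI (fun x Hx => HFY x (HBF x Hx)) HBnm)
    as [e [HYe [HBe HBeI]]].
  assert (HFe : ~ F e).
  { intros HFe; apply HBe, (HBmax _ HBeI); [intros x Hx; left; exact Hx | | right; reflexivity].
    intros x [Hx | ->]; auto. }
  assert (HFeY : subset (set_add F e) Y) by (intros x [Hx | ->]; auto).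
  destruct (not_fin_indep_dependent (fun x Hx => HYE x (HFeY x Hx))) as [D [HDFe [HDfin HD]]].
  { intros HFeI; apply HFe, (HFmax _ HFeI); [intros x Hx; left; exact Hx | exact HFeY | right; reflexivity]. }
  set (D' := fun x => D x /\ x <> e).
  assert (HD'F : subset D' F).
  { intros x [Hx Hxe]; destruct (HDFe x Hx) as [? | ?]; [auto | contradiction]. }
  assert (HD' : I D').
  { apply (proj2 HFfin); [exact HD'F |].
    apply (finite_subset HDfin); intros x [Hx _]; exact Hx. }
  destruct (indep_maximal HD' HD'F (fun x Hx => HYE x (HFY x Hx))) as [J [HD'J HJ]].
  pose proof (maximal_in_add_dependent HJ HDFe HD (fun x Hx Hxe => HD'J x (conj Hx Hxe))) as HJFe.
  destruct (maximal_in_augment HJFe (fun x Hx => or_introl (HBF x Hx)) (or_intror eq_refl) HBe HBeI)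
    as [b [HJb [HBb HBbI]]].
  apply HBb, (HBmax _ HBbI); [intros x Hx; left; exact Hx | | right; reflexivity].
  intros x [Hx | ->]; [apply HBF, Hx | apply (proj1 (proj2 HJ)), HJb].
Qed.

Lemma indep_exchange_two {W s e y} :
  I (set_add W s) -> ~ I (set_add (set_add W s) e) -> ~ I (set_add (set_add W s) y) -> e <> y ->
  ~ I (set_add (set_add W e) y).
Proof.
  intros HP HPe HPy Hey HQy.
  assert (HPmax : maximal_in I (set_add (set_add (set_add W s) e) y) (set_add W s)).
  { split; [exact HP | split; [intros z Hz; left; left; exact Hz |]].
    intros G HG HPG HGW z Hz.
    destruct (HGW z Hz) as [[HPz | ->] | ->]; [exact HPz | exfalso; apply HPe | exfalso; apply HPy];
      apply (indep_subset HG); intros w [Hw | ->]; auto. }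
  assert (HWy : ~ W y).
  { intros HWy; apply HPy, (indep_subset HP); intros z [Hz | ->]; [exact Hz | left; exact HWy]. }
  assert (HQW : subset (set_add W e) (set_add (set_add (set_add W s) e) y)).
  { intros z [Hz | ->]; [left; left; left; exact Hz | left; right; reflexivity]. }
  assert (HQy' : ~ set_add W e y) by (intros [Hy | Hye]; [exact (HWy Hy) | exact (Hey (eq_sym Hye))]).
  destruct (maximal_in_augment HPmax HQW (or_intror eq_refl) HQy' HQy) as [b [HPb [HQb HQbI]]].
  destruct HPb as [HWb | ->]; [apply HQb; left; exact HWb |].
  apply HPe, (indep_subset HQbI).
  intros z [[Hz | ->] | ->]; [left; left; exact Hz | right; reflexivity | left; right; reflexivity].
Qed.

Lemma fin_maximal_exchange {Y F s e y} :
  subset Y E -> maximal_in (fin_indep E I) Y F -> F s -> Y e -> Y y -> ~ F e -> ~ F y -> e <> y ->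
  ~ fin_indep E I (set_add (set_add (fun z => F z /\ z <> s) e) y).
Proof.
  intros HYE HF HFs HYe HYy HFe HFy Hey HG; pose proof HF as ((_ & HFfin) & HFY & HFmax).
  assert (Hdep : forall a, Y a -> ~ F a -> exists D, subset D (set_add F a) /\ finite D /\ ~ I D).
  { intros a HYa HFa; apply not_fin_indep_dependent.
    - intros z [Hz | ->]; apply HYE; auto.
    - intros HFaI; apply HFa, (HFmax _ HFaI); [intros z Hz; left; exact Hz | | right; reflexivity].
      intros z [Hz | ->]; auto. }
  destruct (Hdep e HYe HFe) as [De [HDe [HDefin HDeI]]].
  destruct (Hdep y HYy HFy) as [Dy [HDy [HDyfin HDyI]]].
  set (W := fun z => (F z /\ z <> s) /\ (De z \/ Dy z)).
  assert (HWfin : finite W).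
  { apply (finite_subset (finite_union HDefin HDyfin)); intros z [_ Hz]; exact Hz. }
  assert (HWD : forall D a, subset D (set_add F a) -> subset D (fun z => De z \/ Dy z) ->
                  subset D (set_add (set_add W s) a)).
  { intros D a HDa HDW z Hz; destruct (HDa z Hz) as [HFz | ->]; [left | right; reflexivity].
    destruct (classic (z = s)) as [-> | Hzs]; [right; reflexivity | left; split; [split |]; auto]. }
  apply (indep_exchange_two (W := W) (s := s) (e := e) (y := y)); [| | | exact Hey |].
  - apply HFfin; [intros z [[[Hz _] _] | ->]; auto | apply finite_add, HWfin].
  - intros HI; apply HDeI, (indep_subset HI), (HWD De e HDe); intros z Hz; left; exact Hz.
  - intros HI; apply HDyI, (indep_subset HI), (HWD Dy y HDy); intros z Hz; right; exact Hz.
  - apply (proj2 HG); [| apply finite_add, finite_add, HWfin].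
    intros z [[[Hz _] | ->] | ->]; [left; left; exact Hz | left; right | right]; reflexivity.
Qed.

Lemma fin_maximal_delete_one {Y Y' F' s} :
  subset Y E -> subset Y' Y -> (forall x, Y x -> ~ Y' x -> x = s) ->
  maximal_in (fin_indep E I) Y F' ->
  exists F, (forall x, F' x -> x <> s -> F x) /\ maximal_in (fin_indep E I) Y' F.
Proof.
  intros HYE HY'Y Hs HF'; pose proof HF' as (HF'fin & HF'Y & _).
  destruct (classic (subset F' Y')) as [HF'Y' | HF'nY'].
  { exists F'; split; [intros x Hx _; exact Hx | exact (maximal_in_mono HF' HF'Y' HY'Y)]. }
  assert (HF's : F' s /\ ~ Y' s).
  { apply NNPP; intros Hn; apply HF'nY'; intros x Hx; apply NNPP; intros HY'x.
    apply Hn; rewrite <- (Hs x (HF'Y x Hx) HY'x); auto. }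
  set (F0 := fun x => F' x /\ x <> s).
  assert (HF0Y' : subset F0 Y').
  { intros x [Hx Hxs]; apply NNPP; intros HY'x; exact (Hxs (Hs x (HF'Y x Hx) HY'x)). }
  assert (HF0 : fin_indep E I F0) by (apply (fin_indep_subset HF'fin); intros x [Hx _]; exact Hx).
  assert (HF'out : forall x, Y' x -> ~ F0 x -> ~ F' x).
  { intros x HY'x HF0x HF'x; apply HF0x; split; [exact HF'x | intros ->; exact (proj2 HF's HY'x)]. }
  destruct (classic (maximal_in (fin_indep E I) Y' F0)) as [HF0max | HF0nmax].
  { exists F0; split; [intros x Hx Hxs; split; auto | exact HF0max]. }
  destruct (not_maximal_in_ex (@fin_indep_subset) HF0 HF0Y' HF0nmax) as [e [HY'e [HF0e HF0eI]]].
  exists (set_add F0 e); split; [intros x Hx Hxs; left; split; auto |].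
  apply NNPP; intros HF0enmax.
  assert (HF0eY' : subset (set_add F0 e) Y') by (intros x [Hx | ->]; auto).
  destruct (not_maximal_in_ex (@fin_indep_subset) HF0eI HF0eY' HF0enmax) as [y [HY'y [HF0ey HF0eyI]]].
  apply (fin_maximal_exchange HYE HF' (proj1 HF's) (HY'Y e HY'e) (HY'Y y HY'y)); [| | | exact HF0eyI].
  - exact (HF'out e HY'e HF0e).
  - apply (HF'out y HY'y); intros HF0y; apply HF0ey; left; exact HF0y.
  - intros ->; apply HF0ey; right; reflexivity.
Qed.

Lemma card_le_setminus_maximal_in {Y B B' s} :
  maximal_in I Y B' -> I B -> subset B Y -> (forall x, B' x -> x <> s -> B x) ->
  card_le (setminus B B') 1.
Proof.
  intros HB' HB HBY HB'B; pose proof HB' as (_ & HB'Y & HB'max).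
  destruct (classic (exists b, B b /\ ~ B' b)) as [[b1 [HBb1 HB'b1]] | Hno].
  2: { exists nil; split; [auto | intros x [HBx HB'x]; exfalso; eauto]. }
  exists (b1 :: nil); split; [auto |].
  set (A := set_add (fun x => B' x /\ x <> s) b1).
  assert (HAB : subset A B) by (intros x [[Hx Hxs] | ->]; auto).
  assert (HAY : subset A Y) by (intros x Hx; apply HBY, HAB, Hx).
  assert (HAmax : maximal_in I Y A).
  { apply NNPP; intros HAnm.
    destruct (nonmaximal_augment (indep_subset HB HAB) HAY HAnm HB') as [b [HB'b [HAb HAbI]]].
    assert (b = s) as -> by (apply NNPP; intros Hbs; apply HAb; left; split; auto).
    apply HB'b1, (HB'max (set_add B' b1)); [| intros x Hx; left; exact Hx | | right; reflexivity].
    - apply (indep_subset HAbI); intros x [Hx | ->]; [| left; right; reflexivity].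
      destruct (classic (x = s)) as [-> | Hxs]; [right; reflexivity | left; left; split; auto].
    - intros x [Hx | ->]; [apply HB'Y, Hx | apply HBY, HBb1]. }
  intros b2 [HBb2 HB'b2]; left.
  assert (HAb2 : A b2).
  { apply (proj2 (proj2 HAmax) (set_add A b2)); [| intros x Hx; left; exact Hx | | right; reflexivity].
    - apply (indep_subset HB); intros x [Hx | ->]; [apply HAB, Hx | exact HBb2].
    - intros x [Hx | ->]; [apply HAY, Hx | apply HBY, HBb2]. }
  destruct HAb2 as [[HB'b2' _] | ->]; [contradiction | reflexivity].
Qed.

(* [M|Y] is n-nearly finitary, with the bases of [M|Y] and of its finitarization
   written as maximal subsets of [Y]. *)
Definition n_nearly_finitary_on (n : nat) Y : Prop :=
  forall F B, maximal_in (fin_indep E I) Y F -> maximal_in I Y B -> subset B F ->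
    card_le (setminus F B) n.

Lemma n_nearly_finitary_on_restrict {n Y} :
  subset Y E -> n_nearly_finitary n Y (restrict I Y) -> n_nearly_finitary_on n Y.
Proof.
  intros HYE Hn F B HF HB HBF.
  exact (Hn F B (proj2 (is_base_fin_restrict HYE) HF) (proj2 is_base_restrict HB) HBF).
Qed.

Lemma n_nearly_finitary_of_on {n} : n_nearly_finitary_on n E -> n_nearly_finitary n E I.
Proof.
  intros Hn F B HF HB HBF.
  exact (Hn F B (proj1 is_base_fin_ground HF) (proj1 is_base_maximal_in_ground HB) HBF).
Qed.

Lemma n_nearly_finitary_on_add_one {n Y Y' s} :
  subset Y E -> subset Y' Y -> (forall x, Y x -> ~ Y' x -> x = s) ->
  n_nearly_finitary_on n Y' -> n_nearly_finitary_on (n + 2) Y.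
Proof.
  intros HYE HY'Y Hs Hn F' B' HF' HB' HB'F'.
  assert (HY'E : subset Y' E) by (intros x Hx; apply HYE, HY'Y, Hx).
  destruct (fin_maximal_delete_one HYE HY'Y Hs HF') as [F [HF'F HF]].
  set (B'' := fun x => B' x /\ x <> s).
  destruct (indep_maximal (A := B'') (X := F)) as [B [HB''B HB]].
  { apply (indep_subset (proj1 HB')); intros x [Hx _]; exact Hx. }
  { intros x [Hx Hxs]; apply HF'F; auto. }
  { intros x Hx; apply HY'E, (proj1 (proj2 HF)), Hx. }
  pose proof HB as (HBI & HBF & _).
  pose proof (maximal_in_of_fin_maximal_in HY'E HF HB) as HBY'.
  change (n + 2) with (n + (1 + 1)).
  apply (card_le_subset (B := fun x => setminus F B x \/ (x = s \/ setminus B B' x))).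
  - apply card_le_union; [exact (Hn F B HF HBY' HBF) | apply card_le_union].
    + exists (s :: nil); split; [auto | intros x ->; left; reflexivity].
    + apply (card_le_setminus_maximal_in (s := s) HB' HBI); [| intros x Hx Hxs; apply HB''B; split; auto].
      intros x Hx; apply HY'Y, (proj1 (proj2 HBY')), Hx.
  - intros x [HF'x HB'x]; destruct (classic (x = s)) as [-> | Hxs]; [right; left; reflexivity |].
    destruct (classic (B x)) as [HBx | HBx]; [right; right; split; auto | left; split; auto].
Qed.

Lemma nearly_finitary_restrict {Y} (l : list T) :
  nearly_finitary E I -> subset Y E -> (forall x, E x -> ~ Y x -> In x l) ->
  nearly_finitary Y (restrict I Y).
Proof.
  intros Hnf HYE Hl F B HF HB HBF.
  apply (is_base_fin_restrict HYE) in HF; apply (proj1 is_base_restrict) in HB.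
  destruct (finite_difference_ind (fun Z => exists F', subset F F' /\ maximal_in (fin_indep E I) Z F') E)
    with l Y as [F' [HFF' HF']]; auto.
  { intros Z Z' a HZZ' _ Ha [F1 [HFF1 HF1]].
    destruct (maximal_in_add_one (@fin_indep_subset) HF1 HZZ' Ha) as [F2 [HF1F2 HF2]].
    exists F2; split; [intros x Hx; apply HF1F2, HFF1, Hx | exact HF2]. }
  { exists F; split; [intros x Hx; exact Hx | exact HF]. }
  destruct (indep_maximal (proj1 HB) (fun x Hx => HFF' x (HBF x Hx)) (proj1 (proj2 HF')))
    as [B2 [HBB2 HB2]].
  pose proof (maximal_in_of_fin_maximal_in (fun x Hx => Hx) HF' HB2) as HB2E.
  apply (finite_subset (Hnf F' B2 (proj2 is_base_fin_ground HF')
                          (proj2 is_base_maximal_in_ground HB2E) (proj1 (proj2 HB2)))).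
  intros x [HFx HBx]; split; [apply HFF', HFx |].
  intros HB2x; apply HBx, (maximal_in_cap (@indep_subset) HB HBB2 (proj1 HB2) x HB2x).
  apply (proj1 (proj2 HF)), HFx.
Qed.

End Matroid.

Theorem theorem3p4p7 (T : Type) (E : T -> Prop) (I : (T -> Prop) -> Prop)
  (S : T -> Prop) :
  is_matroid E I ->
  nearly_finitary E I ->
  (forall n : nat, ~ n_nearly_finitary n E I) ->
  subset S E -> finite S ->
  is_matroid (del_ground E S) (del_indep E I S) /\
  nearly_finitary (del_ground E S) (del_indep E I S) /\
  (forall n : nat, ~ n_nearly_finitary n (del_ground E S) (del_indep E I S)).
Proof.
  intros HM Hnf Hnn _ [l Hl].
  assert (HYE : subset (setminus E S) E) by (intros x [Hx _]; exact Hx).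
  assert (Hl' : forall x, E x -> ~ setminus E S x -> In x l).
  { intros x Hx HSx; apply Hl, NNPP; intros HnSx; apply HSx; split; auto. }
  split; [| split].
  - exact (restrict_matroid HM HYE).
  - exact (nearly_finitary_restrict HM l Hnf HYE Hl').
  - intros n Hn.
    destruct (finite_difference_ind (fun Y => exists m, n_nearly_finitary_on (E := E) (I := I) m Y) E)
      with l (setminus E S) as [m Hm]; auto.
    + intros Y Y' a HYY' HY'E Ha [m Hm].
      exists (m + 2); exact (n_nearly_finitary_on_add_one HM HY'E HYY' Ha Hm).
    + exists n; exact (n_nearly_finitary_on_restrict HYE Hn).
    + exact (Hnn m (n_nearly_finitary_of_on HM Hm)).
Qed.
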